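(* Let $A\ge 1$. For $0\le b\le a\le A$ define $$e(a,b)=\frac{2b(a-b)}{1+(a-b)^2}.$$ Then the maximum of $e$ over $0\le b\le a\le A$ is attained at $$a=A,\qquad b=\frac{1+A^2-\sqrt{1+A^2}}{A},$$ and the maximal value is $$e\!\left(A,\frac{1+A^2-\sqrt{1+A^2}}{A}\right)=\sqrt{1+A^2}-1.$$
   Context: Geometric meaning: the page is the rectangle $[0,1]\times[0,A]$ (width $1$, height $A\ge1$) with its top edge fixed. A crease through $(0,a)$ on the left edge and $(1,b)$ on the right edge, with $a\ge b$, reflects the lower trapezoid $(0,0),(1,0),(1,b),(0,a)$ across it. The reflected bottom-right corner then has $x$-coordinate $1+e(a,b)$. *)

From Stdlib Require Import Reals.
Open Scope R_scope.

Definition e (a b : R) : R := 2 * b * (a - b) / (1 + (a - b) ^ 2).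

(* Only the overlap d = a - b and the lower end b matter: e a b = 2 b d / (1 + d^2).
   For fixed d, b is largest when the crease is pushed up to a = A, so the problem
   reduces to maximising 2 (A - d) d / (1 + d^2) over d.  With s = sqrt (1 + A^2),
   the gap (s - 1) (1 + d^2) - 2 (A - d) d equals ((s + 1) d - A)^2 / (s + 1), so
   the maximum is s - 1, attained at d = A / (s + 1). *)

From Stdlib Require Import Reals Lra Psatz.
Open Scope R_scope.

Lemma e_le_top (a b A : R) :
  0 <= b -> b <= a -> a <= A -> e a b <= e A (A - (a - b)).
Proof.
  intros Hb Hba HaA; unfold e.
  replace (A - (A - (a - b))) with (a - b) by ring.
  assert (Hden : 0 < 1 + (a - b) ^ 2) by nra.
  apply Rmult_le_compat_r; [now apply Rlt_le, Rinv_0_lt_compat | nra].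
Qed.

Lemma top_gap_identity (A s d : R) :
  s ^ 2 = 1 + A ^ 2 ->
  (s + 1) * ((s - 1) * (1 + d ^ 2) - 2 * (A - d) * d) = ((s + 1) * d - A) ^ 2.
Proof. intros Hs2; nra. Qed.

Lemma e_top_le (A s d : R) :
  s ^ 2 = 1 + A ^ 2 -> 0 <= s -> e A (A - d) <= s - 1.
Proof.
  intros Hs2 Hs; unfold e.
  replace (A - (A - d)) with d by ring.
  assert (Hden : 0 < 1 + d ^ 2) by nra.
  apply Rmult_le_reg_r with (1 + d ^ 2); [exact Hden|].
  unfold Rdiv; rewrite Rmult_assoc, Rinv_l, Rmult_1_r by lra.
  enough (0 <= (s - 1) * (1 + d ^ 2) - 2 * (A - d) * d) by lra.
  apply Rmult_le_reg_l with (s + 1); [lra|].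
  rewrite Rmult_0_r, (top_gap_identity A s d Hs2); apply pow2_ge_0.
Qed.

Lemma e_top_eq (A s d : R) :
  s ^ 2 = 1 + A ^ 2 -> 0 <= s -> (s + 1) * d = A -> e A (A - d) = s - 1.
Proof.
  intros Hs2 Hs Hd.
  assert (Hgap := top_gap_identity A s d Hs2).
  rewrite Hd, Rminus_diag, pow_i in Hgap by lia.
  apply Rmult_integral in Hgap as [Hs1 | Hgap]; [lra|].
  unfold e; replace (A - (A - d)) with d by ring.
  replace (2 * (A - d) * d) with ((s - 1) * (1 + d ^ 2)) by lra.
  field; nra.
Qed.

Theorem mainTheorem5 (A : R) (HA : 1 <= A) :
  let bstar := (1 + A ^ 2 - sqrt (1 + A ^ 2)) / A in
  (0 <= bstar <= A) /\
  (forall a b : R, 0 <= b -> b <= a -> a <= A -> e a b <= e A bstar) /\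
  e A bstar = sqrt (1 + A ^ 2) - 1.
Proof.
  intros bstar.
  set (s := sqrt (1 + A ^ 2)).
  assert (Hs : 0 <= s) by apply sqrt_pos.
  assert (Hs2 : s ^ 2 = 1 + A ^ 2) by (rewrite <- Rsqr_pow2; apply Rsqr_sqrt; nra).
  assert (Hd : (s + 1) * (A / (s + 1)) = A) by (field; lra).
  assert (Hbstar : bstar = A - A / (s + 1)).
  { unfold bstar; fold s.
    apply Rmult_eq_reg_r with (A * (s + 1)); [|nra].
    field_simplify; [nra | lra | lra]. }
  assert (HE : e A bstar = s - 1) by (rewrite Hbstar; now apply e_top_eq).
  split; [|split; [|exact HE]].
  - rewrite Hbstar; nra.
  - intros a b Hb Hba HaA.
    rewrite HE.
    apply Rle_trans with (e A (A - (a - b))); [now apply e_le_top|].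
    now apply e_top_le.
Qed.
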